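(* There is an absolute constant $c>0$ such that every ordered tree $T$ with maximum degree $d\ge 1$ has a 3D arc diagram drawing with base plane $\mathcal{P}_1=\{z=0\}$ whose perpendicular projection onto $\mathcal{P}_1$ is a straight-line drawing of $T$ (each arc projecting onto the segment joining its endpoints) and whose angular resolution is at least $c/\sqrt{d}$.
   Context: An ordered tree is a tree together with a prescribed cyclic ordering of the edges around each vertex. A 3D arc diagram drawing of $T$ with base plane $\mathcal{P}_1=\{z=0\}$ is a placement of the vertices at distinct points of $\mathcal{P}_1$, together with, for each edge $e=(a,b)$, a circular arc (a contiguous subset of a circle; a straight segment is allowed as the degenerate case) with endpoints at the positions of $a$ and $b$, such that: the arc lies in the plane $\mathcal{P}_2$ containing the segment $ab$ and perpendicular to $\mathcal{P}_1$; all arcs lie in the closed half-space $z\ge 0$; and the arc forms the same angle $\alpha_e\in[0,\pi/2]$ with the segment $ab$ at both of its endpoints. The angle between two arcs incident to a common vertex $v$ is the angle in $[0,\pi]$ between their tangent rays at $v$ (directed into the arcs). The angular resolution of the drawing is the minimum of this angle over all vertices $v$ and all pairs of distinct edges incident to $v$. *)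

From Stdlib Require Import Reals Lra Lia List Relations.
Import ListNotations.
Open Scope R_scope.

Definition adj (E : list (nat * nat)) (a b : nat) : Prop :=
  In (a, b) E \/ In (b, a) E.

Definition is_tree (n : nat) (E : list (nat * nat)) : Prop :=
  (1 <= n)%nat /\
  (forall a b, In (a, b) E -> (a < n)%nat /\ (b < n)%nat /\ a <> b) /\
  length E = (n - 1)%nat /\
  (forall v, (v < n)%nat -> clos_refl_trans nat (adj E) 0%nat v).

Definition degree (E : list (nat * nat)) (v : nat) : nat :=
  length (filter (fun e => orb (Nat.eqb (fst e) v) (Nat.eqb (snd e) v)) E).

Definition max_degree (n : nat) (E : list (nat * nat)) (d : nat) : Prop :=
  (exists v, (v < n)%nat /\ degree E v = d) /\
  (forall v, (v < n)%nat -> (degree E v <= d)%nat).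

(** Ordered tree: a rotation system, i.e. for every vertex v a list
    [rot v] enumerating the neighbours of v without repetition; the
    list is read cyclically (its starting point is irrelevant). *)
Definition is_rotation_system (n : nat) (E : list (nat * nat))
    (rot : nat -> list nat) : Prop :=
  forall v, (v < n)%nat ->
    NoDup (rot v) /\ (forall w, In w (rot v) <-> adj E v w).

Definition is_ordered_tree (n : nat) (E : list (nat * nat))
    (rot : nat -> list nat) : Prop :=
  is_tree n E /\ is_rotation_system n E rot.

(** * Plane geometry (the base plane P1 = {z = 0} is identified with R^2) *)

Definition pt := (R * R)%type.

Definition on_segment (a b x : pt) : Prop :=
  exists s, 0 <= s <= 1 /\
    x = ((1 - s) * fst a + s * fst b, (1 - s) * snd a + s * snd b).

(** Planar straight-line drawing of the ordered tree with vertex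
    positions p: distinct vertex positions; two distinct edges (as
    segments) meet only in a common endpoint; and the counterclockwise
    order of the edges around every vertex is the prescribed cyclic
    order [rot v]. *)
Definition straight_line_drawing (n : nat) (E : list (nat * nat))
    (rot : nat -> list nat) (p : nat -> pt) : Prop :=
  (forall u v, (u < n)%nat -> (v < n)%nat -> u <> v -> p u <> p v) /\
  (forall a b c d x, In (a, b) E -> In (c, d) E -> (a, b) <> (c, d) ->
     on_segment (p a) (p b) x -> on_segment (p c) (p d) x ->
     exists u, (u = a \/ u = b) /\ (u = c \/ u = d) /\ x = p u) /\
  (forall v, (v < n)%nat ->
     exists theta : nat -> R,
       (forall i, (S i < length (rot v))%nat -> theta i < theta (S i)) /\
       ((0 < length (rot v))%nat ->
          theta (length (rot v) - 1)%nat < theta 0%nat + 2 * PI) /\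
       (forall i, (i < length (rot v))%nat ->
          exists r, 0 < r /\
            fst (p (nth i (rot v) 0%nat)) - fst (p v) = r * cos (theta i) /\
            snd (p (nth i (rot v) 0%nat)) - snd (p v) = r * sin (theta i))).

(** * 3D arc diagrams
    The arc of the edge {v,w} lies in the vertical plane through the
    segment p v -- p w, in the half-space z >= 0, and makes the same angle
    alpha v w in [0, pi/2] with the segment at both endpoints.  Such an arc
    is uniquely determined by alpha (alpha = 0: the segment itself;
    alpha in (0, pi/2]: the upper circular arc of at most a half circle);
    in particular it projects perpendicularly onto the segment [p v, p w].
    A 3D arc diagram drawing is thus given by the vertex positions p in
    the base plane and the angle function alpha (symmetric on edges). *)
Definition arc_diagram (n : nat) (E : list (nat * nat))
    (p : nat -> pt) (alpha : nat -> nat -> R) : Prop :=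
  (forall u v, (u < n)%nat -> (v < n)%nat -> u <> v -> p u <> p v) /\
  (forall v w, adj E v w -> 0 <= alpha v w <= PI / 2 /\ alpha v w = alpha w v).

Definition pt3 := (R * R * R)%type.

Definition arc_tangent (p : nat -> pt) (alpha : nat -> nat -> R)
    (v w : nat) : pt3 :=
  let dx := fst (p w) - fst (p v) in
  let dy := snd (p w) - snd (p v) in
  let L := sqrt (dx * dx + dy * dy) in
  let a := alpha v w in
  (cos a * (dx / L), cos a * (dy / L), sin a).

Definition dot3 (x y : pt3) : R :=
  let '(x1, x2, x3) := x in let '(y1, y2, y3) := y in
  x1 * y1 + x2 * y2 + x3 * y3.

Definition arc_angle (p : nat -> pt) (alpha : nat -> nat -> R)
    (v w1 w2 : nat) : R :=
  acos (dot3 (arc_tangent p alpha v w1) (arc_tangent p alpha v w2)).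

Definition angular_resolution_ge (n : nat) (E : list (nat * nat))
    (p : nat -> pt) (alpha : nat -> nat -> R) (r : R) : Prop :=
  forall v w1 w2, (v < n)%nat -> adj E v w1 -> adj E v w2 -> w1 <> w2 ->
    r <= arc_angle p alpha v w1 w2.

(** We root the tree at vertex [0] and draw it recursively.  A vertex [v]
    with [m] neighbours sends its [i]-th edge (in the order of [rot v]) in
    the direction [fan v + π i / m]; the fan is rotated so that the edge
    back to the parent points opposite to the edge entering [v].  A vertex
    of depth [k] is placed at distance [shrink^k] from its parent, where
    [shrink = sin(π/(2d))/4].  Then the subtree of a vertex of depth [k]
    lies in an L1-ball of radius [O(shrink^(k+1))] around it
    ([subtree_in_ball]), which stays strictly on its side of every line
    bisecting two edge directions at the parent ([subtree_side]); with the
    trichotomy of positions of two vertices in a tree ([tree_trichotomy])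
    this shows that the drawing is planar ([edges_meet_at_endpoints]).

    For the angles, the edges are spread over [K = ⌈√d⌉] levels: the [i]-th
    edge at [v] gets level [(shift v + i) mod K], consistently seen from its
    two endpoints, and its arc rises at elevation [level · π/(4K)].  Two edges
    at a vertex on different levels differ in elevation by [≥ π/(4K)]; two on
    the same level are [≥ K] indices, hence [≥ π/√d] in direction, apart.
    Either way their tangents make an angle [≥ π/(8√d)] ([angle_at_vertex]). *)

From Stdlib Require Import Reals List Lra Lia Psatz Relations Wf_nat ClassicalEpsilon Classical.
Import ListNotations.
Open Scope R_scope.

Lemma acos_ge (x g : R) : 0 <= g <= PI -> x <= cos g -> g <= acos x.
Proof.
  intros Hg Hx. pose proof (acos_bound x) as Hb.
  destruct (Rle_dec x (-1)) as [Hlo|Hlo].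
  { unfold acos. destruct (Rle_dec x (-1)); [lra|contradiction]. }
  destruct (Rle_dec 1 x) as [Hhi|Hhi].
  { pose proof (COS_bound g).
    destruct (Req_dec g 0) as [->|Hg0]; [lra|].
    assert (Hc : cos g < cos 0) by (apply cos_decreasing_1; lra).
    rewrite cos_0 in Hc; lra. }
  destruct (Rle_dec g (acos x)) as [|Hlt]; auto.
  assert (Hc : cos g < cos (acos x)) by (apply cos_decreasing_1; lra).
  rewrite cos_acos in Hc; lra.
Qed.

Lemma cos_antitone (x y : R) : 0 <= x -> x <= y -> y <= PI -> cos y <= cos x.
Proof.
  intros H1 H2 H3. destruct (Req_dec x y) as [->|Hne]; [lra|].
  left. apply cos_decreasing_1; lra.
Qed.

Lemma cos_Rabs (z : R) : cos (Rabs z) = cos z.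
Proof. unfold Rabs; destruct (Rcase_abs z); auto using cos_neg. Qed.

Lemma Rabs_sin (x : R) : Rabs x <= PI -> Rabs (sin x) = sin (Rabs x).
Proof.
  intros Hx. unfold Rabs at 2. destruct (Rcase_abs x) as [Hn|Hp].
  - rewrite Rabs_left in Hx by lra.
    assert (0 <= sin (- x)) by (apply sin_ge_0; lra).
    rewrite sin_neg in *. apply Rabs_left1. lra.
  - rewrite Rabs_right in Hx by lra. apply Rabs_right, Rle_ge, sin_ge_0; lra.
Qed.

Lemma Rabs_PI_frac (a b : R) : 0 < b -> Rabs (PI * a / b) = PI * Rabs a / b.
Proof.
  intros Hb. pose proof PI_RGT_0. unfold Rdiv.
  rewrite !Rabs_mult, (Rabs_right PI), (Rabs_right (/ b)) by (apply Rle_ge; auto with real; lra).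
  reflexivity.
Qed.

Definition tilted (t a : R) : pt3 := (cos a * cos t, cos a * sin t, sin a).

Lemma dot3_tilted (t1 a1 t2 a2 : R) :
  dot3 (tilted t1 a1) (tilted t2 a2) = cos a1 * cos a2 * cos (t1 - t2) + sin a1 * sin a2.
Proof. unfold tilted, dot3. rewrite cos_minus. ring. Qed.

Lemma angle_ge_elevation_gap (t1 a1 t2 a2 dl : R) :
  0 <= a1 <= PI / 2 -> 0 <= a2 <= PI / 2 -> 0 <= dl <= Rabs (a1 - a2) ->
  dl <= acos (dot3 (tilted t1 a1) (tilted t2 a2)).
Proof.
  intros Ha1 Ha2 Hdl. pose proof PI_RGT_0.
  assert (Hgap : Rabs (a1 - a2) <= PI / 2)
    by (unfold Rabs; destruct (Rcase_abs (a1 - a2)); lra).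
  apply acos_ge; [lra|]. rewrite dot3_tilted.
  assert (Hcos12 : 0 <= cos a1 * cos a2)
    by (apply Rmult_le_pos; apply cos_ge_0; lra).
  pose proof (COS_bound (t1 - t2)).
  assert (cos a1 * cos a2 * cos (t1 - t2) <= cos a1 * cos a2) by nra.
  assert (Hcd : cos (a1 - a2) <= cos dl)
    by (rewrite <- cos_Rabs; apply cos_antitone; lra).
  rewrite cos_minus in Hcd. lra.
Qed.

Lemma angle_ge_half_direction_gap (t1 t2 a ph : R) :
  0 <= a <= PI / 4 -> 0 <= ph <= Rabs (t1 - t2) -> Rabs (t1 - t2) <= PI ->
  ph / 2 <= acos (dot3 (tilted t1 a) (tilted t2 a)).
Proof.
  intros Ha Hph Hdir. pose proof PI_RGT_0.
  apply acos_ge; [lra|]. rewrite dot3_tilted.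
  assert (Hc : cos (t1 - t2) <= cos ph)
    by (rewrite <- cos_Rabs; apply cos_antitone; lra).
  assert (Hs : sin a * sin a = 1 - cos a * cos a)
    by (pose proof (sin2_cos2 a) as Hp; unfold Rsqr in Hp; lra).
  assert (H2a : 0 <= cos (2 * a)) by (apply cos_ge_0; lra).
  rewrite cos_2a_cos in H2a.
  assert (Hhalf : cos ph = 2 * cos (ph / 2) * cos (ph / 2) - 1)
    by (rewrite <- cos_2a_cos; f_equal; field).
  assert (0 <= cos (ph / 2)) by (apply cos_ge_0; lra).
  pose proof (COS_bound (ph / 2)). pose proof (COS_bound ph).
  rewrite Hs.
  assert (cos a * cos a * cos (t1 - t2) <= cos a * cos a * cos ph) by nra.
  nra.
Qed.

Definition polar_step (p : pt) (L t : R) : pt := (fst p + L * cos t, snd p + L * sin t).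

Lemma on_segment_sym (p q y : pt) : on_segment p q y -> on_segment q p y.
Proof. intros [s [Hs ->]]. exists (1 - s). split; [lra|]. f_equal; ring. Qed.

Lemma on_segment_end (p q : pt) : on_segment p q q.
Proof. exists 1. split; [lra|]. destruct p, q; simpl; f_equal; ring. Qed.

Lemma on_segment_polar (p y : pt) (L t : R) : on_segment p (polar_step p L t) y ->
  exists s, 0 <= s <= 1 /\ y = polar_step p (s * L) t.
Proof.
  intros [s [Hs ->]]. exists s. split; [exact Hs|]. unfold polar_step. simpl. f_equal; ring.
Qed.

Lemma arc_tangent_tilted (p : nat -> pt) (alpha : nat -> nat -> R) (v w : nat) (L t : R) :
  0 < L -> p w = polar_step (p v) L t -> arc_tangent p alpha v w = tilted t (alpha v w).
Proof.
  intros HL Hw. unfold arc_tangent, tilted. rewrite Hw. unfold polar_step. simpl.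
  replace (fst (p v) + L * cos t - fst (p v)) with (L * cos t) by ring.
  replace (snd (p v) + L * sin t - snd (p v)) with (L * sin t) by ring.
  assert (Hunit : sin t * sin t + cos t * cos t = 1)
    by (pose proof (sin2_cos2 t) as Hp; unfold Rsqr in Hp; exact Hp).
  replace (L * cos t * (L * cos t) + L * sin t * (L * sin t))
    with (L * L * (sin t * sin t + cos t * cos t)) by ring.
  rewrite Hunit, Rmult_1_r.
  rewrite sqrt_square by lra.
  replace (L * cos t / L) with (cos t) by (field; lra).
  replace (L * sin t / L) with (sin t) by (field; lra).
  reflexivity.
Qed.

Fixpoint index_of (l : list nat) (x : nat) : nat :=
  match l with
  | [] => 0%nat
  | y :: l' => if Nat.eqb y x then 0%nat else S (index_of l' x)
  end.

Lemma index_of_spec (l : list nat) (x : nat) : In x l ->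
  (index_of l x < length l)%nat /\ nth (index_of l x) l 0%nat = x.
Proof.
  induction l as [|y l IH]; simpl; intros Hx; [contradiction|].
  destruct (Nat.eqb_spec y x) as [->|Hne]; [split; [lia|reflexivity]|].
  destruct Hx as [Hx|Hx]; [congruence|]. destruct (IH Hx). split; [lia|auto].
Qed.

Lemma index_of_nth (l : list nat) (i : nat) : NoDup l -> (i < length l)%nat ->
  index_of l (nth i l 0%nat) = i.
Proof.
  revert i. induction l as [|y l IH]; simpl; intros i Hnd Hi; [lia|].
  inversion Hnd as [|? ? Hy Hnd']; subst.
  destruct i as [|i]; [now rewrite Nat.eqb_refl|].
  destruct (Nat.eqb_spec y (nth i l 0%nat)) as [Heq|Hne].
  - exfalso. apply Hy. rewrite Heq. apply nth_In. lia.
  - f_equal. apply IH; auto. lia.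
Qed.

Lemma congruent_indices_far (K s i j : nat) : (0 < K)%nat -> i <> j ->
  ((s + i) mod K = (s + j) mod K)%nat -> (K <= i - j \/ K <= j - i)%nat.
Proof.
  intros HK Hij Hmod.
  pose proof (Nat.div_mod (s + i) K ltac:(lia)) as Hi.
  pose proof (Nat.div_mod (s + j) K ltac:(lia)) as Hj.
  rewrite Hmod in Hi.
  set (qi := ((s + i) / K)%nat) in *. set (qj := ((s + j) / K)%nat) in *.
  assert (Hq : qi <> qj) by (intro Hq; rewrite Hq in Hi; lia).
  destruct (proj1 (Nat.lt_gt_cases qi qj) Hq) as [Hlt|Hlt]; [right|left]; nia.
Qed.

Lemma INR_dist_ge (k i j : nat) : (k <= i - j \/ k <= j - i)%nat ->
  INR k <= Rabs (INR i - INR j).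
Proof.
  intros Hk. destruct (Nat.le_gt_cases j i) as [Hji|Hij].
  - rewrite <- minus_INR, Rabs_right by (auto using Rle_ge, pos_INR).
    apply le_INR. lia.
  - rewrite Rabs_minus_sym, <- minus_INR, Rabs_right by (lia || auto using Rle_ge, pos_INR).
    apply le_INR. lia.
Qed.

Lemma INR_dist_lt (i j m : nat) : (i < m)%nat -> (j < m)%nat ->
  Rabs (INR i - INR j) <= INR m - 1.
Proof.
  intros Hi Hj. apply Rabs_le.
  assert (INR i + 1 <= INR m) by (rewrite <- S_INR; apply le_INR; lia).
  assert (INR j + 1 <= INR m) by (rewrite <- S_INR; apply le_INR; lia).
  pose proof (pos_INR i). pose proof (pos_INR j). lra.
Qed.

Definition pair_eq_dec (x y : nat * nat) : {x = y} + {x <> y}.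
Proof. decide equality; apply Nat.eq_dec. Defined.

Section Construction.
Variables (n : nat) (E : list (nat * nat)) (rot : nat -> list nat) (d : nat).
Hypothesis tree : is_tree n E.

Fixpoint reach (k v : nat) : Prop :=
  match k with
  | O => v = 0%nat
  | S k' => reach k' v \/ exists w, reach k' w /\ adj E w v
  end.

Lemma edge_bounds (a b : nat) : adj E a b -> (a < n)%nat /\ (b < n)%nat /\ a <> b.
Proof.
  destruct tree as [_ [Hedges _]]. intros [Hin|Hin]; apply Hedges in Hin; intuition.
Qed.

Lemma reach_all (v : nat) : (v < n)%nat -> exists k, reach k v.
Proof.
  intros Hv. destruct tree as [_ [_ [_ Hconn]]].
  pose proof (clos_rt_rtn1 _ _ _ _ (Hconn v Hv)) as Hwalk. clear Hv.
  induction Hwalk as [|y z Hyz _ IH].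
  - exists 0%nat. reflexivity.
  - destruct IH as [k Hk]. exists (S k). right. exists y. auto.
Qed.

Definition depth (v : nat) : nat :=
  epsilon (inhabits 0%nat) (fun k => reach k v /\ forall j, reach j v -> (k <= j)%nat).

Definition parent (v : nat) : nat :=
  if Nat.eqb v 0 then 0%nat
  else epsilon (inhabits 0%nat) (fun u => adj E v u /\ depth v = S (depth u)).

Lemma depth_spec (v : nat) : (exists k, reach k v) ->
  reach (depth v) v /\ forall j, reach j v -> (depth v <= j)%nat.
Proof.
  intros Hex. unfold depth. apply epsilon_spec.
  destruct (dec_inh_nat_subset_has_unique_least_element (fun j => reach j v)
              (fun j => classic _) Hex) as [k [Hk _]].
  exists k. exact Hk.
Qed.

Lemma depth_root : depth 0 = 0%nat.
Proof.
  destruct (depth_spec 0 (ex_intro _ 0%nat eq_refl)) as [_ Hmin].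
  specialize (Hmin 0%nat eq_refl). lia.
Qed.

Lemma parent_spec (v : nat) : (v < n)%nat -> v <> 0%nat ->
  (parent v < n)%nat /\ adj E v (parent v) /\ depth v = S (depth (parent v)).
Proof.
  intros Hv Hv0.
  assert (Hex : exists u, adj E v u /\ depth v = S (depth u)).
  { destruct (depth_spec v (reach_all v Hv)) as [Hr Hmin].
    destruct (depth v) as [|k] eqn:Hd; [contradiction|].
    destruct Hr as [Hr|[w [Hw Hwv]]]; [specialize (Hmin k Hr); lia|].
    destruct (depth_spec w (ex_intro _ k Hw)) as [Hrw Hminw].
    specialize (Hminw k Hw).
    assert (Hv' : reach (S (depth w)) v) by (right; exists w; auto).
    specialize (Hmin _ Hv'). exists w. split; [unfold adj in *; tauto|lia]. }
  assert (Hp : adj E v (parent v) /\ depth v = S (depth (parent v))).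
  { unfold parent. destruct (Nat.eqb_spec v 0); [contradiction|].
    apply epsilon_spec. exact Hex. }
  split; [apply (edge_bounds _ _ (proj1 Hp))|exact Hp].
Qed.

Lemma depth_zero (v : nat) : (v < n)%nat -> depth v = 0%nat -> v = 0%nat.
Proof.
  intros Hv Hd. destruct (Nat.eq_dec v 0) as [|Hv0]; auto.
  destruct (parent_spec v Hv Hv0) as [_ [_ Hdp]]. lia.
Qed.

Lemma grandparent_neq (v : nat) : (v < n)%nat -> v <> 0%nat -> parent (parent v) <> v.
Proof.
  intros Hv Hv0 Hpp. destruct (parent_spec v Hv Hv0) as [Hpn [_ Hd]].
  destruct (Nat.eq_dec (parent v) 0) as [Hz|Hz].
  - rewrite Hz in Hpp. simpl in Hpp. auto.
  - destruct (parent_spec _ Hpn Hz) as [_ [_ Hd2]]. rewrite Hpp in Hd2. lia.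
Qed.

Definition entry (v : nat) : nat * nat :=
  if in_dec pair_eq_dec (parent v, v) E then (parent v, v)
  else (v, parent v).

Lemma entry_cases (v : nat) : entry v = (parent v, v) \/ entry v = (v, parent v).
Proof. unfold entry. destruct in_dec; auto. Qed.

Lemma entry_in (v : nat) : (v < n)%nat -> v <> 0%nat -> In (entry v) E.
Proof.
  intros Hv Hv0. unfold entry. destruct (in_dec pair_eq_dec (parent v, v) E) as [|Hnot]; auto.
  destruct (parent_spec v Hv Hv0) as [_ [[Hin|Hin] _]]; [exact Hin|contradiction].
Qed.

Lemma entry_inj (v1 v2 : nat) : (v1 < n)%nat -> v1 <> 0%nat -> (v2 < n)%nat -> v2 <> 0%nat ->
  entry v1 = entry v2 -> v1 = v2.
Proof.
  intros H1 H10 H2 H20 Heq. pose proof (grandparent_neq v1 H1 H10).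
  destruct (entry_cases v1) as [X1|X1]; destruct (entry_cases v2) as [X2|X2];
    rewrite X1, X2 in Heq; inversion Heq; congruence.
Qed.

(** Since [E] has exactly [n - 1] edges, the [n - 1] injective entries
    exhaust it: every edge joins a vertex to its parent. *)
Lemma edge_is_entry (a b : nat) : In (a, b) E ->
  exists v, (v < n)%nat /\ v <> 0%nat /\ entry v = (a, b).
Proof.
  intros Hab. set (nonroot := seq 1 (n - 1)).
  assert (Hnonroot : forall v, In v nonroot <-> (v < n)%nat /\ v <> 0%nat)
    by (intros v; unfold nonroot; rewrite in_seq; lia).
  assert (Hincl : incl E (map entry nonroot)).
  { apply NoDup_length_incl.
    - apply NoDup_map_NoDup_ForallPairs; [|apply seq_NoDup].
      intros x y Hx Hy. apply Hnonroot in Hx, Hy. apply entry_inj; tauto.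
    - rewrite length_map. unfold nonroot. rewrite length_seq.
      destruct tree as [_ [_ [Hlen _]]]. lia.
    - intros e He. apply in_map_iff in He. destruct He as [v [<- Hv]].
      apply Hnonroot in Hv. apply entry_in; tauto. }
  apply Hincl, in_map_iff in Hab. destruct Hab as [v [Hv Hvn]].
  apply Hnonroot in Hvn. exists v. tauto.
Qed.

Lemma edge_parent_child (a b : nat) : adj E a b ->
  (b <> 0 /\ parent b = a)%nat \/ (a <> 0 /\ parent a = b)%nat.
Proof.
  intros [Hin|Hin]; destruct (edge_is_entry _ _ Hin) as [v [_ [Hv0 Hv]]];
    destruct (entry_cases v) as [X|X]; rewrite X in Hv; inversion Hv; subst; auto.
Qed.

Definition child_of_edge (x a b : nat) : Prop :=
  (parent x = a /\ x = b) \/ (parent x = b /\ x = a).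

Lemma child_of_edge_unique (a b c e x : nat) : In (a, b) E -> In (c, e) E -> (a, b) <> (c, e) ->
  child_of_edge x a b -> ~ child_of_edge x c e.
Proof.
  intros H1 H2 Hne C1 C2.
  assert (Hentry : forall v a b, (v < n)%nat -> v <> 0%nat -> entry v = (a, b) ->
    child_of_edge x a b -> x = v).
  { intros v a0 b0 Hv Hv0 Ev C. pose proof (grandparent_neq v Hv Hv0).
    destruct (entry_cases v) as [X|X]; rewrite X in Ev; inversion Ev;
      destruct C as [[P Q]|[P Q]]; congruence. }
  destruct (edge_is_entry _ _ H1) as [v1 [Hv1 [Hv10 E1]]].
  destruct (edge_is_entry _ _ H2) as [v2 [Hv2 [Hv20 E2]]].
  apply Hne. rewrite <- E1, <- E2.
  rewrite <- (Hentry v1 a b), <- (Hentry v2 c e); auto.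
Qed.

Definition in_subtree (c a : nat) : Prop :=
  exists t, (t <= depth a)%nat /\ Nat.iter t parent a = c.

Definition via_child (v c a : nat) : Prop :=
  (c < n)%nat /\ c <> 0%nat /\ parent c = v /\ in_subtree c a.

Lemma ancestor_props (t a : nat) : (a < n)%nat -> (t <= depth a)%nat ->
  (Nat.iter t parent a < n)%nat /\ depth (Nat.iter t parent a) = (depth a - t)%nat.
Proof.
  induction t as [|t IH]; intros Ha Ht; simpl; [split; [auto|lia]|].
  destruct (IH Ha ltac:(lia)) as [Hn Hd].
  assert (Hz : Nat.iter t parent a <> 0%nat) by (intro Z; rewrite Z, depth_root in Hd; lia).
  destruct (parent_spec _ Hn Hz) as [Hpn [_ Hpd]]. split; [auto|lia].
Qed.

Lemma in_subtree_refl (a : nat) : in_subtree a a.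
Proof. exists 0%nat. split; [lia|reflexivity]. Qed.

Lemma in_subtree_parent (c a : nat) : (a < n)%nat -> a <> 0%nat ->
  in_subtree c (parent a) -> in_subtree c a.
Proof.
  intros Ha Ha0 [t [Ht Hi]]. destruct (parent_spec a Ha Ha0) as [_ [_ Hd]].
  exists (S t). split; [lia|]. rewrite Nat.iter_succ_r. exact Hi.
Qed.

Lemma in_subtree_depth (c a : nat) : (a < n)%nat -> in_subtree c a ->
  (c < n)%nat /\ (depth c <= depth a)%nat.
Proof.
  intros Ha [t [Ht <-]]. destruct (ancestor_props t a Ha Ht). split; [auto|lia].
Qed.

Lemma in_subtree_same_depth (c a : nat) : (a < n)%nat -> in_subtree c a ->
  depth c = depth a -> c = a.
Proof.
  intros Ha [t [Ht <-]] Hd. destruct (ancestor_props t a Ha Ht) as [_ Hd'].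
  replace t with 0%nat by lia. reflexivity.
Qed.

Lemma in_subtree_strict (c a : nat) : (a < n)%nat -> in_subtree c a -> a <> c ->
  a <> 0%nat /\ in_subtree c (parent a).
Proof.
  intros Ha [[|t] [Ht Hi]] Hne; [simpl in Hi; congruence|].
  assert (Ha0 : a <> 0%nat) by (intro Z; subst; rewrite depth_root in Ht; lia).
  destruct (parent_spec a Ha Ha0) as [_ [_ Hd]].
  split; [exact Ha0|]. exists t. split; [lia|]. rewrite <- Nat.iter_succ_r. exact Hi.
Qed.

Lemma via_child_nonroot (v c a : nat) : (a < n)%nat -> via_child v c a -> a <> 0%nat.
Proof.
  intros Ha [Hc [Hc0 [_ Hsub]]] ->. destruct (in_subtree_depth c 0 Ha Hsub) as [_ Hd].
  rewrite depth_root in Hd. apply Hc0, depth_zero; [auto|lia].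
Qed.

Definition separated (a b : nat) : Prop :=
  (exists c, via_child b c a) \/ (exists c, via_child a c b) \/
  (exists v c1 c2, c1 <> c2 /\ via_child v c1 a /\ via_child v c2 b).

Lemma separated_sym (a b : nat) : separated a b -> separated b a.
Proof.
  intros [H|[H|[v [c1 [c2 [Hne [H1 H2]]]]]]]; [right; left|left|right; right]; auto.
  exists v, c2, c1. auto.
Qed.

Lemma separated_lift (a b : nat) : (a < n)%nat -> (b < n)%nat -> a <> 0%nat -> a <> b ->
  (depth b <= depth a)%nat -> parent a <> b -> separated (parent a) b -> separated a b.
Proof.
  intros Ha Hb Ha0 Hab Hle Hpb Hsep. destruct (parent_spec a Ha Ha0) as [Hpa [_ Hda]].
  destruct Hsep as [[c Hc]|[[c Hc]|[v [c1 [c2 [Hne [H1 H2]]]]]]].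
  - left. exists c. destruct Hc as [? [? [? Hc]]]. repeat split; auto.
    apply in_subtree_parent; auto.
  - destruct Hc as [Hcn [Hc0 [Hpc Hsub]]].
    destruct (in_subtree_depth _ _ Hb Hsub) as [_ Hdc].
    destruct (parent_spec c Hcn Hc0) as [_ [_ Hdcc]]. rewrite Hpc in Hdcc.
    assert (c = b) by (apply in_subtree_same_depth; auto; lia). subst c.
    right; right. exists (parent a), a, b.
    split; [auto|split; repeat split; auto using in_subtree_refl].
  - right; right. exists v, c1, c2. split; [auto|split; [|auto]].
    destruct H1 as [? [? [? Hc]]]. repeat split; auto. apply in_subtree_parent; auto.
Qed.

(** Any two distinct vertices are separated: induction on the sum of the
    depths, lifting the deeper vertex. *)
Lemma tree_trichotomy (a b : nat) : (a < n)%nat -> (b < n)%nat -> a <> b -> separated a b.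
Proof.
  remember (depth a + depth b)%nat as N eqn:HN.
  revert a b HN. induction N as [N IH] using (well_founded_induction lt_wf).
  assert (Hdeeper : forall a b, (depth a + depth b = N)%nat -> (a < n)%nat -> (b < n)%nat ->
    a <> b -> (depth b <= depth a)%nat -> separated a b).
  { intros a b HN Ha Hb Hab Hle.
    assert (Ha0 : a <> 0%nat).
    { intros ->. rewrite depth_root in Hle. apply Hab. symmetry. apply depth_zero; auto; lia. }
    destruct (parent_spec a Ha Ha0) as [Hpa [_ Hda]].
    destruct (Nat.eq_dec (parent a) b) as [Hpb|Hpb].
    - left. exists a. repeat split; auto using in_subtree_refl.
    - apply separated_lift; auto. apply (IH (depth (parent a) + depth b)%nat); auto. lia. }
  intros a b HN Ha Hb Hab.
  destruct (Nat.le_gt_cases (depth b) (depth a)); [apply Hdeeper; auto|].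
  apply separated_sym, Hdeeper; auto; lia.
Qed.

Hypothesis rotation : is_rotation_system n E rot.
Hypothesis max_deg : max_degree n E d.
Hypothesis d_pos : (1 <= d)%nat.

Definition deg (v : nat) : nat := length (rot v).

(** The rotation at [v] lists distinct neighbours, each giving a distinct
    edge at [v], so it has at most [d] entries. *)
Lemma deg_le (v : nat) : (v < n)%nat -> (deg v <= d)%nat.
Proof.
  intros Hv. destruct (rotation v Hv) as [Hnd Hrot]. destruct max_deg as [_ Hmax].
  set (edge_to := fun w => if in_dec pair_eq_dec (v, w) E then (v, w) else (w, v)).
  eapply Nat.le_trans; [|apply (Hmax v Hv)].
  unfold deg, degree. rewrite <- (length_map edge_to).
  apply NoDup_incl_length.
  - apply NoDup_map_NoDup_ForallPairs; auto.
    intros x y Hx Hy. apply Hrot in Hx, Hy.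
    pose proof (edge_bounds _ _ Hx). pose proof (edge_bounds _ _ Hy).
    unfold edge_to. destruct (in_dec pair_eq_dec (v, x) E), (in_dec pair_eq_dec (v, y) E);
      intro Z; inversion Z; subst; auto; lia.
  - intros e He. apply in_map_iff in He. destruct He as [w [<- Hw]]. apply Hrot in Hw.
    apply filter_In. unfold edge_to.
    destruct (in_dec pair_eq_dec (v, w) E) as [Hin|Hnot]; simpl.
    + rewrite Nat.eqb_refl. auto.
    + destruct Hw as [Hin|Hin]; [contradiction|]. rewrite Nat.eqb_refl, Bool.orb_true_r. auto.
Qed.

Lemma rot_index (v w : nat) : (v < n)%nat -> adj E v w ->
  (index_of (rot v) w < deg v)%nat /\ nth (index_of (rot v) w) (rot v) 0%nat = w.
Proof. intros Hv Hvw. apply index_of_spec, (rotation v Hv), Hvw. Qed.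

Lemma rot_nth (v i : nat) : (v < n)%nat -> (i < deg v)%nat ->
  adj E v (nth i (rot v) 0%nat) /\ index_of (rot v) (nth i (rot v) 0%nat) = i.
Proof.
  intros Hv Hi. destruct (rotation v Hv) as [Hnd Hrot].
  split; [apply Hrot, nth_In, Hi|apply index_of_nth; auto].
Qed.

Definition nlevels : nat := Nat.sqrt_up d.

(** sin(π/(2d)) bounds from below the sine of half the angle between two
    edge directions at a vertex. *)
Definition sin_step : R := sin (PI / (2 * INR d)).

Definition shrink : R := sin_step / 4.

Definition parent_index (v : nat) : nat := index_of (rot v) (parent v).

(** Start of the fan of edge directions at [v] when the edge from the parent
    enters [v] with direction [th]: the edge back to the parent, of index
    [parent_index v], then points along [th + π]. *)
Definition fan_start (v : nat) (th : R) : R :=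
  if Nat.eqb v 0 then 0 else th + PI - PI * INR (parent_index v) / INR (deg v).

(** Level offset at [v] when the edge from the parent has level [l]: the
    edge back to the parent then keeps level [l]. *)
Definition level_shift (v l : nat) : nat :=
  if Nat.eqb v 0 then 0%nat else (l + nlevels * deg v - parent_index v)%nat.

Fixpoint frame (k v : nat) : R * nat * pt :=
  match k with
  | O => (0, 0%nat, (0, 0))
  | S k' =>
      let u := parent v in
      let '(th, l, p) := frame k' u in
      let i := index_of (rot u) v in
      let th' := fan_start u th + PI * INR i / INR (deg u) in
      (th', ((level_shift u l + i) mod nlevels)%nat, polar_step p (shrink ^ depth v) th')
  end.

Definition in_dir (v : nat) : R := fst (fst (frame (depth v) v)).
Definition level (v : nat) : nat := snd (fst (frame (depth v) v)).
Definition pos (v : nat) : pt := snd (frame (depth v) v).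

Definition fan (v : nat) : R := fan_start v (in_dir v).
Definition shift (v : nat) : nat := level_shift v (level v).

Definition dir (v i : nat) : R := fan v + PI * INR i / INR (deg v).

Lemma frame_step (v : nat) : (v < n)%nat -> v <> 0%nat ->
  in_dir v = dir (parent v) (index_of (rot (parent v)) v) /\
  level v = ((shift (parent v) + index_of (rot (parent v)) v) mod nlevels)%nat /\
  pos v = polar_step (pos (parent v)) (shrink ^ depth v) (in_dir v).
Proof.
  intros Hv Hv0. destruct (parent_spec v Hv Hv0) as [_ [_ Hd]].
  unfold dir, fan, shift, in_dir, level, pos.
  replace (frame (depth v) v) with (frame (S (depth (parent v))) v) by (rewrite Hd; reflexivity).
  simpl. destruct (frame (depth (parent v)) (parent v)) as [[th l] p]. repeat split.
Qed.

Lemma nlevels_pos : (0 < nlevels)%nat.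
Proof.
  unfold nlevels. pose proof (Nat.sqrt_up_spec d ltac:(lia)) as [_ Hsq].
  destruct (Nat.sqrt_up d); simpl in *; lia.
Qed.

Lemma nlevels_bounds : 1 <= INR nlevels /\ sqrt (INR d) <= INR nlevels /\ INR nlevels <= 2 * sqrt (INR d).
Proof.
  pose proof (Nat.sqrt_up_spec d ltac:(lia)) as [Hlo Hhi]. fold nlevels in Hlo, Hhi.
  pose proof nlevels_pos as HK.
  assert (H4 : (nlevels * nlevels <= 4 * d)%nat) by (destruct nlevels as [|j]; simpl in Hlo; nia).
  apply le_INR in Hhi, H4, HK. rewrite mult_INR in Hhi. rewrite !mult_INR in H4.
  replace (INR 4) with 4 in H4 by (simpl; ring). simpl in HK.
  assert (1 <= INR d) by (apply (le_INR 1); lia).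
  pose proof (sqrt_lt_R0 (INR d) ltac:(lra)). pose proof (sqrt_sqrt (INR d) ltac:(lra)).
  set (k := INR nlevels) in *. set (s := sqrt (INR d)) in *.
  split; [lra|split].
  - destruct (Rle_lt_dec s k) as [|Hks]; [auto|nra].
  - destruct (Rle_lt_dec k (2 * s)) as [|Hsk]; [auto|nra].
Qed.

Lemma sin_step_bounds : 0 < sin_step <= 1.
Proof.
  unfold sin_step. pose proof PI_RGT_0. assert (1 <= INR d) by (apply (le_INR 1); lia).
  split; [|apply SIN_bound]. apply sin_gt_0; [apply Rdiv_lt_0_compat; lra|].
  assert (PI / (2 * INR d) <= PI / 2).
  { unfold Rdiv. apply Rmult_le_compat_l; [lra|]. apply Rinv_le_contravar; lra. }
  lra.
Qed.

Lemma shrink_bounds : 0 < shrink <= 1 / 4.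
Proof. pose proof sin_step_bounds. unfold shrink. lra. Qed.

Lemma shrink_pow_pos (k : nat) : 0 < shrink ^ k.
Proof. apply pow_lt, shrink_bounds. Qed.

Lemma level_lt (v : nat) : (v < n)%nat -> v <> 0%nat -> (level v < nlevels)%nat.
Proof.
  intros Hv Hv0. destruct (frame_step v Hv Hv0) as [_ [-> _]].
  apply Nat.mod_upper_bound. pose proof nlevels_pos. lia.
Qed.

Lemma shift_parent_index (v : nat) : (v < n)%nat -> v <> 0%nat ->
  ((shift v + parent_index v) mod nlevels)%nat = level v.
Proof.
  intros Hv Hv0. unfold shift, level_shift. destruct (Nat.eqb_spec v 0); [contradiction|].
  destruct (parent_spec v Hv Hv0) as [_ [Hadj _]].
  destruct (rot_index v _ Hv Hadj) as [Hlt _]. fold (parent_index v) in Hlt.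
  pose proof nlevels_pos.
  replace (level v + nlevels * deg v - parent_index v + parent_index v)%nat
    with (level v + deg v * nlevels)%nat by nia.
  rewrite Nat.Div0.mod_add. apply Nat.mod_small, level_lt; auto.
Qed.

Lemma dir_parent_index (v : nat) : (v < n)%nat -> v <> 0%nat ->
  dir v (parent_index v) = in_dir v + PI.
Proof.
  intros Hv Hv0. destruct (parent_spec v Hv Hv0) as [_ [Hadj _]].
  destruct (rot_index v _ Hv Hadj) as [Hlt _].
  assert (0 < INR (deg v)) by (apply lt_0_INR; unfold parent_index in Hlt; lia).
  unfold dir, fan, fan_start. destruct (Nat.eqb_spec v 0); [contradiction|]. field. lra.
Qed.

Lemma child_vector (v i w : nat) : (v < n)%nat -> (i < deg v)%nat ->
  nth i (rot v) 0%nat = w -> w <> 0%nat -> parent w = v ->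
  pos w = polar_step (pos v) (shrink ^ depth w) (dir v i) /\
  level w = ((shift v + i) mod nlevels)%nat.
Proof.
  intros Hv Hi Hw Hw0 Hpw. destruct (rot_nth v i Hv Hi) as [Hadj Hidx]. rewrite Hw in Hadj, Hidx.
  destruct (edge_bounds _ _ Hadj) as [_ [Hwn _]].
  destruct (frame_step w Hwn Hw0) as [Hdir [Hlev Hpos]]. rewrite Hpw, Hidx in Hdir, Hlev.
  rewrite Hpos, Hdir, Hpw. split; auto.
Qed.

Lemma parent_vector (v : nat) : (v < n)%nat -> v <> 0%nat ->
  pos (parent v) = polar_step (pos v) (shrink ^ depth v) (dir v (parent_index v)).
Proof.
  intros Hv Hv0. destruct (frame_step v Hv Hv0) as [_ [_ Hpos]].
  rewrite dir_parent_index, Hpos by auto. unfold polar_step. simpl.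
  rewrite neg_cos, neg_sin. destruct (pos (parent v)) as [x y]. simpl. f_equal; ring.
Qed.

Lemma edge_vector (v i : nat) : (v < n)%nat -> (i < deg v)%nat ->
  exists L, 0 < L /\ pos (nth i (rot v) 0%nat) = polar_step (pos v) L (dir v i).
Proof.
  intros Hv Hi. destruct (rot_nth v i Hv Hi) as [Hadj Hidx].
  destruct (edge_parent_child _ _ Hadj) as [[Hw0 Hpw]|[Hv0 Hpv]].
  - exists (shrink ^ depth (nth i (rot v) 0%nat)). split; [apply shrink_pow_pos|].
    apply (child_vector v i); auto.
  - exists (shrink ^ depth v). split; [apply shrink_pow_pos|].
    assert (Hi0 : parent_index v = i) by (unfold parent_index; rewrite Hpv; exact Hidx).
    rewrite <- Hpv, <- Hi0. apply parent_vector; auto.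
Qed.

Definition dist1 (y z : pt) : R := Rabs (fst y - fst z) + Rabs (snd y - snd z).

Lemma dist1_polar_step (p z : pt) (L t : R) : 0 <= L ->
  dist1 (polar_step p L t) z <= dist1 p z + 2 * L.
Proof.
  intros HL. unfold dist1, polar_step. simpl.
  pose proof (COS_bound t). pose proof (SIN_bound t).
  assert (Hc : Rabs (L * cos t) <= L) by (rewrite Rabs_mult, Rabs_right by lra; apply Rabs_le in H; nra).
  assert (Hs : Rabs (L * sin t) <= L) by (rewrite Rabs_mult, Rabs_right by lra; apply Rabs_le in H0; nra).
  replace (fst p + L * cos t - fst z) with ((fst p - fst z) + L * cos t) by ring.
  replace (snd p + L * sin t - snd z) with ((snd p - snd z) + L * sin t) by ring.
  pose proof (Rabs_triang (fst p - fst z) (L * cos t)).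
  pose proof (Rabs_triang (snd p - snd z) (L * sin t)). lra.
Qed.

Lemma dist1_segment (p q y z : pt) (r : R) :
  on_segment p q y -> dist1 p z <= r -> dist1 q z <= r -> dist1 y z <= r.
Proof.
  intros [s [Hs ->]] Hp Hq. unfold dist1 in *. simpl.
  replace ((1 - s) * fst p + s * fst q - fst z) with ((1 - s) * (fst p - fst z) + s * (fst q - fst z)) by ring.
  replace ((1 - s) * snd p + s * snd q - snd z) with ((1 - s) * (snd p - snd z) + s * (snd q - snd z)) by ring.
  pose proof (Rabs_triang ((1 - s) * (fst p - fst z)) (s * (fst q - fst z))).
  pose proof (Rabs_triang ((1 - s) * (snd p - snd z)) (s * (snd q - snd z))).
  rewrite !Rabs_mult in *. rewrite (Rabs_right s), (Rabs_right (1 - s)) in * by lra.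
  nra.
Qed.

(** Radius 2·Σ_{j>k} shrink^j of an L1-ball around a vertex of depth [k]
    that contains its whole subtree. *)
Definition subtree_radius (k : nat) : R := 2 * shrink ^ S k / (1 - shrink).

Lemma subtree_radius_nonneg (k : nat) : 0 <= subtree_radius k.
Proof.
  pose proof shrink_bounds. pose proof (shrink_pow_pos (S k)). unfold subtree_radius.
  apply Rle_mult_inv_pos; lra.
Qed.

Lemma subtree_radius_small (k : nat) : subtree_radius k < shrink ^ k * sin_step.
Proof.
  pose proof shrink_bounds. pose proof sin_step_bounds. pose proof (shrink_pow_pos k).
  unfold subtree_radius. simpl.
  replace (2 * (shrink * shrink ^ k) / (1 - shrink)) with (shrink ^ k * (2 * shrink / (1 - shrink)))
    by (field; lra).
  apply Rmult_lt_compat_l; auto.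
  apply (Rmult_lt_reg_r (1 - shrink)); [lra|].
  replace (2 * shrink / (1 - shrink) * (1 - shrink)) with (2 * shrink) by (field; lra).
  unfold shrink in *. nra.
Qed.

(** Telescoping along the ancestors of [a]: each step from a vertex of
    depth [k] to its parent has L1 length at most [2 shrink^k]. *)
Lemma ancestor_dist (t a : nat) : (a < n)%nat -> (t <= depth a)%nat ->
  dist1 (pos a) (pos (Nat.iter t parent a)) <=
    subtree_radius (depth (Nat.iter t parent a)) - subtree_radius (depth a).
Proof.
  revert a. induction t as [|t IH]; intros a Ha Ht.
  - unfold dist1. simpl. rewrite !Rminus_diag, Rabs_R0. lra.
  - assert (Ha0 : a <> 0%nat) by (intros ->; rewrite depth_root in Ht; lia).
    destruct (parent_spec a Ha Ha0) as [Hpa [_ Hda]].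
    rewrite Nat.iter_succ_r. pose proof (IH (parent a) Hpa ltac:(lia)) as IHa.
    destruct (frame_step a Ha Ha0) as [_ [_ ->]].
    pose proof (dist1_polar_step (pos (parent a)) (pos (Nat.iter t parent (parent a)))
      (shrink ^ depth a) (in_dir a) (Rlt_le _ _ (shrink_pow_pos _))).
    assert (subtree_radius (depth (parent a)) - subtree_radius (depth a) = 2 * shrink ^ depth a).
    { pose proof shrink_bounds. unfold subtree_radius. rewrite Hda. simpl. field. lra. }
    lra.
Qed.

Lemma subtree_in_ball (c a : nat) : (a < n)%nat -> in_subtree c a ->
  dist1 (pos a) (pos c) <= subtree_radius (depth c).
Proof.
  intros Ha [t [Ht <-]]. pose proof (ancestor_dist t a Ha Ht).
  pose proof (subtree_radius_nonneg (depth a)). lra.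
Qed.

Definition half_gap (v i j : nat) : R := sin (PI * (INR i - INR j) / (2 * INR (deg v))).

(** Signed distance from [y] to the line through [pos v] bisecting the
    directions [i] and [j] at [v], scaled by [half_gap v i j] so that it is
    positive on the side of direction [i]. *)
Definition side (v i j : nat) (y : pt) : R :=
  let b := (dir v i + dir v j) / 2 in
  half_gap v i j * (cos b * (snd y - snd (pos v)) - sin b * (fst y - fst (pos v))).

Lemma side_antisym (v i j : nat) (y : pt) : side v j i y = - side v i j y.
Proof.
  unfold side, half_gap.
  replace ((dir v j + dir v i) / 2) with ((dir v i + dir v j) / 2) by field.
  replace (PI * (INR j - INR i) / (2 * INR (deg v)))
    with (- (PI * (INR i - INR j) / (2 * INR (deg v)))) by (unfold Rdiv; ring).
  rewrite sin_neg. ring.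
Qed.

Lemma side_on_ray (v i j : nat) (r : R) : (0 < deg v)%nat ->
  side v i j (polar_step (pos v) r (dir v i)) = r * (half_gap v i j * half_gap v i j).
Proof.
  intros Hdeg. assert (0 < INR (deg v)) by (apply lt_0_INR; lia).
  unfold side, polar_step. simpl.
  replace (cos ((dir v i + dir v j) / 2) * (snd (pos v) + r * sin (dir v i) - snd (pos v)) -
           sin ((dir v i + dir v j) / 2) * (fst (pos v) + r * cos (dir v i) - fst (pos v)))
    with (r * sin (dir v i - (dir v i + dir v j) / 2)) by (rewrite sin_minus; ring).
  replace (dir v i - (dir v i + dir v j) / 2) with (PI * (INR i - INR j) / (2 * INR (deg v)))
    by (unfold dir; field; lra).
  unfold half_gap. ring.
Qed.

Lemma side_lipschitz (v i j : nat) (y z : pt) :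
  side v i j z - Rabs (half_gap v i j) * dist1 y z <= side v i j y.
Proof.
  set (b := (dir v i + dir v j) / 2).
  assert (Hdiff : side v i j z - side v i j y =
    half_gap v i j * (cos b * (snd z - snd y) - sin b * (fst z - fst y)))
    by (unfold side, b; cbv zeta; ring).
  assert (Hlin : Rabs (cos b * (snd z - snd y) - sin b * (fst z - fst y)) <= dist1 y z).
  { unfold dist1, Rminus at 1. eapply Rle_trans; [apply Rabs_triang|].
    rewrite Rabs_Ropp, !Rabs_mult, (Rabs_minus_sym (snd z)), (Rabs_minus_sym (fst z)).
    assert (Rabs (cos b) <= 1) by (apply Rabs_le, COS_bound).
    assert (Rabs (sin b) <= 1) by (apply Rabs_le, SIN_bound).
    pose proof (Rabs_pos (fst y - fst z)). pose proof (Rabs_pos (snd y - snd z)).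
    pose proof (Rabs_pos (cos b)). pose proof (Rabs_pos (sin b)). nra. }
  assert (Rabs (side v i j z - side v i j y) <= Rabs (half_gap v i j) * dist1 y z).
  { rewrite Hdiff, Rabs_mult. apply Rmult_le_compat_l; [apply Rabs_pos|exact Hlin]. }
  pose proof (Rle_abs (side v i j z - side v i j y)). lra.
Qed.

(** Two edge directions at [v] are at angle between π/d and π: half that
    angle has sine at least [sin_step]. *)
Lemma half_gap_bound (v i j : nat) : (v < n)%nat -> (i < deg v)%nat -> (j < deg v)%nat -> i <> j ->
  sin_step <= Rabs (half_gap v i j).
Proof.
  intros Hv Hi Hj Hij. pose proof PI_RGT_0.
  assert (Hm : INR (deg v) <= INR d) by (apply le_INR, deg_le, Hv).
  assert (Hm1 : 1 <= INR (deg v)) by (apply (le_INR 1); lia).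
  pose proof (INR_dist_ge 1 i j ltac:(lia)) as Hlo. simpl in Hlo.
  pose proof (INR_dist_lt i j (deg v) Hi Hj) as Hhi.
  assert (Hfrac : Rabs (PI * (INR i - INR j) / (2 * INR (deg v))) =
                  PI * Rabs (INR i - INR j) / (2 * INR (deg v))) by (apply Rabs_PI_frac; lra).
  assert (Hup : PI * Rabs (INR i - INR j) / (2 * INR (deg v)) <= PI / 2).
  { replace (PI / 2) with (PI * INR (deg v) / (2 * INR (deg v))) by (field; lra).
    unfold Rdiv. apply Rmult_le_compat_r; [left; apply Rinv_0_lt_compat; lra|].
    apply Rmult_le_compat_l; lra. }
  assert (Hlow : PI / (2 * INR d) <= PI * Rabs (INR i - INR j) / (2 * INR (deg v))).
  { apply Rle_trans with (PI / (2 * INR (deg v))).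
    - unfold Rdiv. apply Rmult_le_compat_l; [lra|]. apply Rinv_le_contravar; lra.
    - unfold Rdiv. apply Rmult_le_compat_r; [left; apply Rinv_0_lt_compat; lra|]. nra. }
  assert (0 < PI / (2 * INR d)) by (apply Rdiv_lt_0_compat; lra).
  unfold half_gap, sin_step. rewrite Rabs_sin, Hfrac by lra. apply sin_incr_1; lra.
Qed.

Lemma half_gap_sq_ge (v i j : nat) : (v < n)%nat -> (i < deg v)%nat -> (j < deg v)%nat -> i <> j ->
  sin_step * Rabs (half_gap v i j) <= half_gap v i j * half_gap v i j.
Proof.
  intros Hv Hi Hj Hij. set (h := half_gap v i j).
  assert (Hsq : h * h = Rabs h * Rabs h)
    by (rewrite <- Rabs_mult; symmetry; apply Rabs_right; pose proof (Rle_0_sqr h); unfold Rsqr in *; lra).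
  rewrite Hsq. apply Rmult_le_compat_r; [apply Rabs_pos|apply half_gap_bound; auto].
Qed.

Lemma subtree_side (v i j a : nat) (y : pt) : (v < n)%nat -> (i < deg v)%nat -> (j < deg v)%nat -> i <> j ->
  (a < n)%nat -> via_child v (nth i (rot v) 0%nat) a ->
  on_segment (pos (parent a)) (pos a) y ->
  0 <= side v i j y /\ (side v i j y = 0 -> y = pos v /\ parent a = v).
Proof.
  intros Hv Hi Hj Hij Ha Hvia Hseg. pose proof (via_child_nonroot _ _ _ Ha Hvia) as Ha0.
  destruct Hvia as [Hwn [Hw0 [Hpw Hsub]]]. set (w := nth i (rot v) 0%nat) in *.
  destruct (child_vector v i w Hv Hi eq_refl Hw0 Hpw) as [Hpos _].
  set (L := shrink ^ depth w) in *. assert (HL : 0 < L) by apply shrink_pow_pos.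
  pose proof (half_gap_sq_ge v i j Hv Hi Hj Hij) as Hsq.
  pose proof (half_gap_bound v i j Hv Hi Hj Hij). pose proof sin_step_bounds.
  assert (Hdeg : (0 < deg v)%nat) by lia.
  destruct (Nat.eq_dec a w) as [->|Haw].
  - rewrite Hpw, Hpos in Hseg. destruct (on_segment_polar _ _ _ _ Hseg) as [s [Hs ->]].
    assert (Hq : 0 < half_gap v i j * half_gap v i j) by nra.
    rewrite side_on_ray by exact Hdeg. split; [apply Rmult_le_pos; nra|].
    intros Hzero. assert (s = 0) by (apply Rmult_integral in Hzero; destruct Hzero as [Hz|]; [|lra];
      apply Rmult_integral in Hz; lra).
    subst s. split; [|exact Hpw].
    unfold polar_step. destruct (pos v). simpl. f_equal; ring.
  - destruct (in_subtree_strict w a Ha Hsub Haw) as [_ Hsubp].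
    destruct (parent_spec a Ha Ha0) as [Hpan _].
    pose proof (dist1_segment _ _ _ _ _ Hseg (subtree_in_ball w _ Hpan Hsubp)
                  (subtree_in_ball w a Ha Hsub)) as Hy.
    pose proof (side_lipschitz v i j y (pos w)) as Hlip.
    assert (Hw : side v i j (pos w) = L * (half_gap v i j * half_gap v i j))
      by (rewrite Hpos; apply side_on_ray, Hdeg).
    pose proof (subtree_radius_small (depth w)) as Hsmall. fold L in Hsmall.
    assert (Rabs (half_gap v i j) * dist1 y (pos w) <= Rabs (half_gap v i j) * subtree_radius (depth w))
      by (apply Rmult_le_compat_l; [apply Rabs_pos|exact Hy]).
    assert (L * (sin_step * Rabs (half_gap v i j)) <= L * (half_gap v i j * half_gap v i j))
      by (apply Rmult_le_compat_l; lra).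
    assert (0 < Rabs (half_gap v i j) * (L * sin_step - subtree_radius (depth w)))
      by (apply Rmult_lt_0_compat; lra).
    assert (0 < side v i j y) by nra.
    split; [lra|intros; lra].
Qed.

Lemma parent_edge_side (v j : nat) (y : pt) : (v < n)%nat -> v <> 0%nat -> (j < deg v)%nat ->
  j <> parent_index v -> on_segment (pos (parent v)) (pos v) y ->
  0 <= side v (parent_index v) j y /\ (side v (parent_index v) j y = 0 -> y = pos v).
Proof.
  intros Hv Hv0 Hj Hj0 Hseg.
  destruct (parent_spec v Hv Hv0) as [_ [Hadj _]]. destruct (rot_index v _ Hv Hadj) as [Hi _].
  fold (parent_index v) in Hi.
  pose proof (half_gap_sq_ge v _ j Hv Hi Hj (not_eq_sym Hj0)) as Hsq.
  pose proof (half_gap_bound v _ j Hv Hi Hj (not_eq_sym Hj0)). pose proof sin_step_bounds.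
  pose proof (shrink_pow_pos (depth v)).
  rewrite parent_vector in Hseg by auto.
  destruct (on_segment_polar _ _ _ _ (on_segment_sym _ _ _ Hseg)) as [s [Hs ->]].
  assert (Hq : 0 < half_gap v (parent_index v) j * half_gap v (parent_index v) j) by nra.
  rewrite side_on_ray by lia. split; [apply Rmult_le_pos; nra|].
  intros Hzero. assert (s = 0) by (apply Rmult_integral in Hzero; destruct Hzero as [Hz|]; [|lra];
    apply Rmult_integral in Hz; lra).
  subst s.
  unfold polar_step. destruct (pos v). simpl. f_equal; ring.
Qed.

Lemma child_rot_index (v c : nat) : (c < n)%nat -> c <> 0%nat -> parent c = v ->
  (v < n)%nat /\ (index_of (rot v) c < deg v)%nat /\ nth (index_of (rot v) c) (rot v) 0%nat = c.
Proof.
  intros Hc Hc0 Hpc. destruct (parent_spec c Hc Hc0) as [Hvn [Hadj _]]. rewrite Hpc in Hvn, Hadj.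
  split; [exact Hvn|]. apply rot_index; [exact Hvn|unfold adj in *; tauto].
Qed.

Lemma edges_meet_below (a b c : nat) (y : pt) : (a < n)%nat -> (b < n)%nat -> b <> 0%nat ->
  via_child b c a ->
  on_segment (pos (parent a)) (pos a) y -> on_segment (pos (parent b)) (pos b) y ->
  y = pos b /\ parent a = b.
Proof.
  intros Ha Hb Hb0 Hvia Sa Sb. pose proof Hvia as [Hc [Hc0 [Hpc _]]].
  destruct (child_rot_index b c Hc Hc0 Hpc) as [_ [Hic Hnth]].
  destruct (parent_spec b Hb Hb0) as [_ [Hadj _]].
  destruct (rot_index b _ Hb Hadj) as [Hip Hnthp]. fold (parent_index b) in Hip, Hnthp.
  assert (Hne : index_of (rot b) c <> parent_index b).
  { intros Heq. apply (grandparent_neq b Hb Hb0). rewrite <- Hnthp, <- Heq, Hnth. exact Hpc. }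
  rewrite <- Hnth in Hvia.
  destruct (subtree_side b _ _ a y Hb Hic Hip Hne Ha Hvia Sa) as [Hpos Hzero].
  destruct (parent_edge_side b _ y Hb Hb0 Hic Hne Sb) as [Hpos' _].
  rewrite side_antisym in Hpos'. apply Hzero. lra.
Qed.

Lemma sibling_edges_meet (v c1 c2 a b : nat) (y : pt) : (a < n)%nat -> (b < n)%nat -> c1 <> c2 ->
  via_child v c1 a -> via_child v c2 b ->
  on_segment (pos (parent a)) (pos a) y -> on_segment (pos (parent b)) (pos b) y ->
  y = pos v /\ parent a = v /\ parent b = v.
Proof.
  intros Ha Hb Hne V1 V2 Sa Sb. pose proof V1 as [Hc1 [Hc10 [Hp1 _]]]. pose proof V2 as [Hc2 [Hc20 [Hp2 _]]].
  destruct (child_rot_index v c1 Hc1 Hc10 Hp1) as [Hv [Hi1 Hn1]].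
  destruct (child_rot_index v c2 Hc2 Hc20 Hp2) as [_ [Hi2 Hn2]].
  assert (Hne' : index_of (rot v) c1 <> index_of (rot v) c2)
    by (intros Heq; apply Hne; rewrite <- Hn1, <- Hn2, Heq; reflexivity).
  rewrite <- Hn1 in V1. rewrite <- Hn2 in V2.
  destruct (subtree_side v _ _ a y Hv Hi1 Hi2 Hne' Ha V1 Sa) as [P1 Z1].
  destruct (subtree_side v _ _ b y Hv Hi2 Hi1 (not_eq_sym Hne') Hb V2 Sb) as [P2 Z2].
  rewrite side_antisym in P2, Z2.
  destruct (Z1 ltac:(lra)) as [Hy Hpa]. destruct (Z2 ltac:(lra)) as [_ Hpb]. auto.
Qed.

Lemma tree_edges_meet (a b : nat) (y : pt) : (a < n)%nat -> (b < n)%nat -> a <> 0%nat -> b <> 0%nat ->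
  a <> b -> on_segment (pos (parent a)) (pos a) y -> on_segment (pos (parent b)) (pos b) y ->
  exists u, (u = parent a \/ u = a) /\ (u = parent b \/ u = b) /\ y = pos u.
Proof.
  intros Ha Hb Ha0 Hb0 Hab Sa Sb.
  destruct (tree_trichotomy a b Ha Hb Hab) as [[c Hc]|[[c Hc]|[v [c1 [c2 [Hne [V1 V2]]]]]]].
  - destruct (edges_meet_below a b c y Ha Hb Hb0 Hc Sa Sb) as [Hy Hp]. exists b. auto.
  - destruct (edges_meet_below b a c y Hb Ha Ha0 Hc Sb Sa) as [Hy Hp]. exists a. auto.
  - destruct (sibling_edges_meet v c1 c2 a b y Ha Hb Hne V1 V2 Sa Sb) as [Hy [Hpa Hpb]].
    exists v. auto.
Qed.

Lemma dist1_polar_ge (p : pt) (L t : R) : 0 <= L -> L <= dist1 p (polar_step p L t).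
Proof.
  intros HL. unfold dist1, polar_step. simpl.
  replace (fst p - (fst p + L * cos t)) with (- (L * cos t)) by ring.
  replace (snd p - (snd p + L * sin t)) with (- (L * sin t)) by ring.
  rewrite !Rabs_Ropp, !Rabs_mult, (Rabs_right L) by lra.
  assert (1 <= Rabs (cos t) + Rabs (sin t)).
  { pose proof (sin2_cos2 t) as Hu. unfold Rsqr in Hu.
    pose proof (COS_bound t). pose proof (SIN_bound t).
    unfold Rabs; destruct (Rcase_abs (cos t)), (Rcase_abs (sin t)); nra. }
  nra.
Qed.

Lemma via_child_pos_neq (v c a : nat) : (a < n)%nat -> via_child v c a -> pos a <> pos v.
Proof.
  intros Ha [Hc [Hc0 [Hpc Hsub]]] Heq.
  pose proof (subtree_in_ball c a Ha Hsub) as Hball. rewrite Heq in Hball.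
  destruct (frame_step c Hc Hc0) as [_ [_ Hpos]]. rewrite Hpc in Hpos. rewrite Hpos in Hball.
  pose proof (dist1_polar_ge (pos v) _ (in_dir c) (Rlt_le _ _ (shrink_pow_pos (depth c)))).
  pose proof (subtree_radius_small (depth c)). pose proof sin_step_bounds.
  pose proof (shrink_pow_pos (depth c)). nra.
Qed.

Lemma pos_inj (u w : nat) : (u < n)%nat -> (w < n)%nat -> u <> w -> pos u <> pos w.
Proof.
  intros Hu Hw Huw Heq.
  destruct (tree_trichotomy u w Hu Hw Huw) as [[c Hc]|[[c Hc]|[v [c1 [c2 [Hne [V1 V2]]]]]]].
  - exact (via_child_pos_neq w c u Hu Hc Heq).
  - exact (via_child_pos_neq u c w Hw Hc (eq_sym Heq)).
  - assert (Sw : on_segment (pos (parent w)) (pos w) (pos u)) by (rewrite Heq; apply on_segment_end).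
    destruct (sibling_edges_meet v c1 c2 u w (pos u) Hu Hw Hne V1 V2 (on_segment_end _ _) Sw)
      as [Hy _].
    exact (via_child_pos_neq v c1 u Hu V1 Hy).
Qed.

Definition elev (l : nat) : R := PI / (4 * INR nlevels) * INR l.

Definition elevation (v w : nat) : R :=
  if Nat.eqb (parent w) v then elev (level w) else elev (level v).

Lemma elev_bounds (l : nat) : (l < nlevels)%nat -> 0 <= elev l <= PI / 4.
Proof.
  intros Hl. pose proof PI_RGT_0. pose proof nlevels_bounds as [HK _].
  assert (INR l <= INR nlevels) by (apply le_INR; lia). pose proof (pos_INR l).
  assert (0 <= PI / (4 * INR nlevels)) by (apply Rlt_le, Rdiv_lt_0_compat; lra).
  unfold elev. split; [nra|].
  replace (PI / 4) with (PI / (4 * INR nlevels) * INR nlevels) by (field; lra). nra.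
Qed.

Lemma elevation_edge (v i : nat) : (v < n)%nat -> (i < deg v)%nat ->
  elevation v (nth i (rot v) 0%nat) = elev ((shift v + i) mod nlevels).
Proof.
  intros Hv Hi. destruct (rot_nth v i Hv Hi) as [Hadj Hidx]. unfold elevation.
  destruct (edge_parent_child _ _ Hadj) as [[Hw0 Hpw]|[Hv0 Hpv]].
  - rewrite Hpw, Nat.eqb_refl. f_equal. apply (child_vector v i); auto.
  - destruct (Nat.eqb_spec (parent (nth i (rot v) 0%nat)) v) as [Hpp|_].
    + exfalso. apply (grandparent_neq v Hv Hv0). rewrite Hpv. exact Hpp.
    + assert (Hi0 : parent_index v = i) by (unfold parent_index; rewrite Hpv; exact Hidx).
      rewrite <- Hi0, shift_parent_index; auto.
Qed.

(** Edges at [v] on the same level are at least [nlevels ≥ √d] indices,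
    hence an angle [π√d/deg v ≥ π/√d], apart. *)
Lemma same_level_angle (v i1 i2 : nat) (a : R) : (v < n)%nat -> (i1 < deg v)%nat -> (i2 < deg v)%nat ->
  i1 <> i2 -> ((shift v + i1) mod nlevels = (shift v + i2) mod nlevels)%nat -> 0 <= a <= PI / 4 ->
  PI / 8 / sqrt (INR d) <= acos (dot3 (tilted (dir v i1) a) (tilted (dir v i2) a)).
Proof.
  intros Hv Hi1 Hi2 Hne Hmod Ha. pose proof PI_RGT_0.
  pose proof nlevels_bounds as [HK1 [HK2 _]].
  assert (Hm : INR (deg v) <= INR d) by (apply le_INR, deg_le, Hv).
  assert (Hm0 : 0 < INR (deg v)) by (apply lt_0_INR; lia).
  assert (Hd : 1 <= INR d) by (apply (le_INR 1); lia).
  pose proof (sqrt_lt_R0 (INR d) ltac:(lra)). pose proof (sqrt_sqrt (INR d) ltac:(lra)).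
  pose proof (INR_dist_ge _ _ _ (congruent_indices_far _ _ _ _ nlevels_pos Hne Hmod)) as Hfar.
  pose proof (INR_dist_lt i1 i2 (deg v) Hi1 Hi2) as Hnear.
  assert (Hdiff : Rabs (dir v i1 - dir v i2) = PI * Rabs (INR i1 - INR i2) / INR (deg v)).
  { rewrite <- Rabs_PI_frac by lra. f_equal. unfold dir. field. lra. }
  set (ph := PI * INR nlevels / INR (deg v)).
  assert (Hph : 0 <= ph <= Rabs (dir v i1 - dir v i2)).
  { rewrite Hdiff. unfold ph, Rdiv. split; [apply Rmult_le_pos; [nra|]; left; apply Rinv_0_lt_compat; lra|].
    apply Rmult_le_compat_r; [left; apply Rinv_0_lt_compat; lra|]. apply Rmult_le_compat_l; lra. }
  assert (Hpi : Rabs (dir v i1 - dir v i2) <= PI).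
  { rewrite Hdiff. apply Rmult_le_reg_r with (INR (deg v)); [lra|].
    unfold Rdiv. rewrite Rmult_assoc, Rinv_l by lra. nra. }
  eapply Rle_trans; [|apply (angle_ge_half_direction_gap _ _ a ph Ha Hph Hpi)].
  assert (Hgoal : ph / 2 - PI / 8 / sqrt (INR d) =
    PI * (4 * INR nlevels * sqrt (INR d) - INR (deg v)) / (8 * INR (deg v) * sqrt (INR d)))
    by (unfold ph; field; lra).
  assert (0 <= PI * (4 * INR nlevels * sqrt (INR d) - INR (deg v)) / (8 * INR (deg v) * sqrt (INR d))).
  { apply Rle_mult_inv_pos; [|nra]. apply Rmult_le_pos; [lra|]. nra. }
  lra.
Qed.

(** Edges on different levels differ in elevation by at least
    [π/(4K) ≥ π/(8√d)]. *)
Lemma distinct_level_angle (t1 t2 : R) (l1 l2 : nat) : (l1 < nlevels)%nat -> (l2 < nlevels)%nat ->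
  l1 <> l2 -> PI / 8 / sqrt (INR d) <= acos (dot3 (tilted t1 (elev l1)) (tilted t2 (elev l2))).
Proof.
  intros Hl1 Hl2 Hne. pose proof PI_RGT_0. pose proof nlevels_bounds as [HK1 [_ HK3]].
  assert (Hd : 1 <= INR d) by (apply (le_INR 1); lia).
  pose proof (sqrt_lt_R0 (INR d) ltac:(lra)).
  pose proof (elev_bounds l1 Hl1). pose proof (elev_bounds l2 Hl2).
  assert (Hstep : 0 < PI / (4 * INR nlevels)) by (apply Rdiv_lt_0_compat; lra).
  assert (Hgap : PI / (4 * INR nlevels) <= Rabs (elev l1 - elev l2)).
  { unfold elev. rewrite <- Rmult_minus_distr_l, Rabs_mult, (Rabs_right (PI / _)) by lra.
    pose proof (INR_dist_ge 1 l1 l2 ltac:(lia)) as Hone. simpl in Hone. nra. }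
  apply Rle_trans with (PI / (4 * INR nlevels)); [|apply angle_ge_elevation_gap; lra].
  assert (Hgoal : PI / (4 * INR nlevels) - PI / 8 / sqrt (INR d) =
    PI * (8 * sqrt (INR d) - 4 * INR nlevels) / (32 * INR nlevels * sqrt (INR d))) by (field; lra).
  assert (0 <= PI * (8 * sqrt (INR d) - 4 * INR nlevels) / (32 * INR nlevels * sqrt (INR d)))
    by (apply Rle_mult_inv_pos; [apply Rmult_le_pos|]; nra).
  lra.
Qed.

Lemma angle_at_vertex (v w1 w2 : nat) : (v < n)%nat -> adj E v w1 -> adj E v w2 -> w1 <> w2 ->
  PI / 8 / sqrt (INR d) <= arc_angle pos elevation v w1 w2.
Proof.
  intros Hv A1 A2 Hne.
  destruct (rot_index v w1 Hv A1) as [Hi1 Hn1]. destruct (rot_index v w2 Hv A2) as [Hi2 Hn2].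
  set (i1 := index_of (rot v) w1) in *. set (i2 := index_of (rot v) w2) in *.
  assert (Hne' : i1 <> i2) by (intros Heq; apply Hne; rewrite <- Hn1, <- Hn2, Heq; reflexivity).
  destruct (edge_vector v i1 Hv Hi1) as [L1 [HL1 Hp1]]. destruct (edge_vector v i2 Hv Hi2) as [L2 [HL2 Hp2]].
  pose proof (elevation_edge v i1 Hv Hi1) as He1. pose proof (elevation_edge v i2 Hv Hi2) as He2.
  rewrite Hn1 in Hp1, He1. rewrite Hn2 in Hp2, He2.
  unfold arc_angle. rewrite (arc_tangent_tilted _ _ _ _ _ _ HL1 Hp1), (arc_tangent_tilted _ _ _ _ _ _ HL2 Hp2).
  rewrite He1, He2.
  pose proof (Nat.mod_upper_bound (shift v + i1) nlevels ltac:(pose proof nlevels_pos; lia)).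
  pose proof (Nat.mod_upper_bound (shift v + i2) nlevels ltac:(pose proof nlevels_pos; lia)).
  destruct (Nat.eq_dec ((shift v + i1) mod nlevels) ((shift v + i2) mod nlevels)) as [Heq|Hneq].
  - rewrite <- Heq. apply same_level_angle; auto. apply elev_bounds; auto.
  - apply distinct_level_angle; auto.
Qed.

Lemma elevation_edge_props (v w : nat) : adj E v w ->
  0 <= elevation v w <= PI / 2 /\ elevation v w = elevation w v.
Proof.
  intros Hadj. pose proof PI_RGT_0. destruct (edge_bounds v w Hadj) as [Hv [Hw _]].
  assert (Hchild : forall x, (x < n)%nat -> x <> 0%nat ->
            elevation (parent x) x = elevation x (parent x) /\ 0 <= elev (level x) <= PI / 2).
  { intros x Hx Hx0. pose proof (grandparent_neq x Hx Hx0).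
    pose proof (elev_bounds (level x) (level_lt x Hx Hx0)).
    unfold elevation. rewrite Nat.eqb_refl.
    destruct (Nat.eqb_spec (parent (parent x)) x); [contradiction|]. split; [reflexivity|lra]. }
  destruct (edge_parent_child v w Hadj) as [[Hw0 <-]|[Hv0 <-]];
    [destruct (Hchild w Hw Hw0) as [Hsym Hb]|destruct (Hchild v Hv Hv0) as [Hsym Hb]];
    unfold elevation in *; rewrite Nat.eqb_refl in *; split; auto; congruence.
Qed.

Lemma edge_segment_child (a b : nat) (y : pt) : In (a, b) E -> on_segment (pos a) (pos b) y ->
  exists x, (x < n)%nat /\ x <> 0%nat /\ child_of_edge x a b /\ on_segment (pos (parent x)) (pos x) y.
Proof.
  intros Hin Hseg. assert (Hadj : adj E a b) by (left; exact Hin).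
  destruct (edge_bounds a b Hadj) as [Ha [Hb _]].
  destruct (edge_parent_child a b Hadj) as [[Hb0 Hpb]|[Ha0 Hpa]].
  - exists b. unfold child_of_edge. rewrite Hpb. repeat split; auto.
  - exists a. unfold child_of_edge. rewrite Hpa. repeat split; auto using on_segment_sym.
Qed.

Lemma edges_meet_at_endpoints (a b c e : nat) (y : pt) : In (a, b) E -> In (c, e) E -> (a, b) <> (c, e) ->
  on_segment (pos a) (pos b) y -> on_segment (pos c) (pos e) y ->
  exists u, (u = a \/ u = b) /\ (u = c \/ u = e) /\ y = pos u.
Proof.
  intros Hab Hce Hne S1 S2.
  destruct (edge_segment_child a b y Hab S1) as [x1 [Hx1 [Hx10 [C1 T1]]]].
  destruct (edge_segment_child c e y Hce S2) as [x2 [Hx2 [Hx20 [C2 T2]]]].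
  assert (Hx : x1 <> x2) by (intros <-; exact (child_of_edge_unique a b c e x1 Hab Hce Hne C1 C2)).
  destruct (tree_edges_meet x1 x2 y Hx1 Hx2 Hx10 Hx20 Hx T1 T2) as [u [U1 [U2 Hy]]].
  exists u. unfold child_of_edge in *. split; [|split; [|exact Hy]].
  - destruct C1 as [[P Q]|[P Q]]; destruct U1; subst; auto.
  - destruct C2 as [[P Q]|[P Q]]; destruct U2; subst; auto.
Qed.

Lemma rotation_respected (v : nat) : (v < n)%nat ->
  (forall i, (S i < deg v)%nat -> dir v i < dir v (S i)) /\
  ((0 < deg v)%nat -> dir v (deg v - 1) < dir v 0 + 2 * PI) /\
  (forall i, (i < deg v)%nat -> exists r, 0 < r /\
     fst (pos (nth i (rot v) 0%nat)) - fst (pos v) = r * cos (dir v i) /\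
     snd (pos (nth i (rot v) 0%nat)) - snd (pos v) = r * sin (dir v i)).
Proof.
  intros Hv. pose proof PI_RGT_0. unfold dir. split; [|split].
  - intros i Hi. assert (0 < INR (deg v)) by (apply lt_0_INR; lia).
    rewrite S_INR. unfold Rdiv. apply Rplus_lt_compat_l, Rmult_lt_compat_r;
      [apply Rinv_0_lt_compat; lra|lra].
  - intros Hm. assert (0 < INR (deg v)) by (apply lt_0_INR; lia).
    rewrite minus_INR by lia. simpl (INR 0). simpl (INR 1).
    assert (PI * (INR (deg v) - 1) / INR (deg v) < PI).
    { apply Rmult_lt_reg_r with (INR (deg v)); [lra|]. unfold Rdiv.
      rewrite Rmult_assoc, Rinv_l by lra. nra. }
    replace (PI * 0 / INR (deg v)) with 0 by (field; lra). lra.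
  - intros i Hi. destruct (edge_vector v i Hv Hi) as [L [HL Hp]].
    exists L. rewrite Hp. unfold polar_step, dir. simpl. split; [exact HL|split; ring].
Qed.

Lemma construction_correct :
  arc_diagram n E pos elevation /\ straight_line_drawing n E rot pos /\
  angular_resolution_ge n E pos elevation (PI / 8 / sqrt (INR d)).
Proof.
  split; [split|split; [split; [|split]|]].
  - exact pos_inj.
  - exact elevation_edge_props.
  - exact pos_inj.
  - exact edges_meet_at_endpoints.
  - intros v Hv. exists (dir v). exact (rotation_respected v Hv).
  - intros v w1 w2 Hv A1 A2 Hne. exact (angle_at_vertex v w1 w2 Hv A1 A2 Hne).
Qed.

End Construction.

Theorem corollary3 :
  exists c : R, 0 < c /\
  forall (n : nat) (E : list (nat * nat)) (rot : nat -> list nat) (d : nat),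
    is_ordered_tree n E rot ->
    max_degree n E d ->
    (1 <= d)%nat ->
    exists (p : nat -> pt) (alpha : nat -> nat -> R),
      arc_diagram n E p alpha /\
      straight_line_drawing n E rot p /\
      angular_resolution_ge n E p alpha (c / sqrt (INR d)).
Proof.
  exists (PI / 8). split; [pose proof PI_RGT_0; lra|].
  intros n E rot d [Htree Hrot] Hmax Hd.
  exists (pos E rot d), (elevation E rot d).
  exact (construction_correct n E rot d Htree Hrot Hmax Hd).
Qed.
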